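(* Let $K$ be a field of characteristic zero, $x=(x_1,\dots,x_n)$, and let $G\in K[x]^n$ be a Keller map such that $\mathcal{J}G$ is symmetric. Let $i$ be an index and $d$ a positive integer such that $\frac{\partial}{\partial x_i}G_i^{(1)}\neq 0$ and $G_i^{(1)}\mid G_i^{(k)}$ for all $k\in\{1,2,\dots,d-1\}$, where $G_i^{(k)}$ denotes the homogeneous part of degree $k$ of $G_i$. If for some $c\in K$ the polynomial $G_i-c$ has a divisor $g$ with $\deg g<d$ and $g(0)=0$, then $\deg G_i=1$.
   Context: A Keller map is a polynomial map $G\in K[x]^n$ with $\det\mathcal{J}G\in K^{*}$, $\mathcal{J}$ the Jacobian matrix. *)

From HB Require Import structures.
From mathcomp Require Import all_boot all_order all_algebra.
From mathcomp Require Import mpoly.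
Set Implicit Arguments. Unset Strict Implicit. Unset Printing Implicit Defensive.
Import Order.TTheory GRing.Theory Num.Theory.
Local Open Scope ring_scope.

Definition hpart (n : nat) (R : ringType) (k : nat) (p : {mpoly R[n]}) : {mpoly R[n]} :=
  \sum_(m <- msupp p | mdeg m == k) p@_m *: 'X_[m].

(* Total degree (with deg 0 = 0; only used on nonzero / via "<" below). *)
Definition mtdeg (n : nat) (R : ringType) (p : {mpoly R[n]}) : nat := (msize p).-1.

Definition mdvd (n : nat) (R : ringType) (g p : {mpoly R[n]}) : Prop :=
  exists q : {mpoly R[n]}, p = q * g.

Definition jacobian (n : nat) (R : ringType) (G : 'I_n -> {mpoly R[n]}) : 'M[{mpoly R[n]}]_n :=
  \matrix_(i < n, j < n) (G i)^`M(j).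

Definition keller (n : nat) (R : comRingType) (G : 'I_n -> {mpoly R[n]}) : Prop :=
  exists2 c : R, c != 0 & \det (jacobian G) = c%:MP.

From HB Require Import structures.
From mathcomp Require Import all_boot all_order all_algebra.
From mathcomp Require Import mpoly.
From mathcomp Require Import ring zify.
Set Implicit Arguments. Unset Strict Implicit. Unset Printing Implicit Defensive.
Import Order.TTheory GRing.Theory Num.Theory.
Local Open Scope ring_scope.

(* Let L be the linear part of G_i, with coefficients a_j (so a_i != 0), and
   let F = G_i - c.  The substitution x_i := x_i - L / a_i is a ring morphism
   that kills L, is the identity modulo L and preserves homogeneous parts.

   L divides F: after the substitution F has no monomials of degree < d, since
   those homogeneous parts of F are multiples of L.  As F = q g with q(0) != 0
   (F has the nonzero linear part L while g(0) = 0), the image of g has no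
   monomials of degree < d either; its degree is < d, so it is 0, i.e. L | g.

   Write F = h L and let C be the adjugate of JG.  Row i of JG is grad F, so
   (grad F) C = det JG e_i; by symmetry of JG, d/dx_i JG is the Hessian of F,
   so tr (C Hess F) = d/dx_i det JG = 0 by Jacobi's formula.  Pairing C with
   (grad L)^T (grad F) gives h X + L Y = det JG a_i, a nonzero constant, so the
   image of h under the substitution is constant and h = 1 modulo L.  If
   h = 1 + L^(s+1) u, then Hess F = (s+2)(s+1) L^s u (grad L)^T (grad L) modulo
   L^(s+1), and the second identity forces L | u in characteristic 0.  Hence
   every power of L divides h - 1, so h = 1 and G_i = L + c. *)

Section HomogeneousParts.
Variables (R : nzRingType) (n : nat).
Implicit Types (p q : {mpoly R[n]}) (m : 'X_{1..n}).

Lemma hpartE k p : hpart k p = pihomog mdeg k p.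
Proof. by []. Qed.

Lemma mcoeff_hpart k p m : (hpart k p)@_m = if mdeg m == k then p@_m else 0.
Proof.
rewrite /hpart raddf_sum /= big_mkcond /=.
under eq_bigr do rewrite mcoeffZ mcoeffX.
have [pm0|pm_ne0] := eqVneq p@_m 0.
  rewrite pm0 if_same big1 // => m' _.
  by case: (m' =P m) => [->|_]; rewrite ?pm0 ?mul0r ?mulr0 if_same.
rewrite (bigD1_seq m) ?msupp_uniq ?mcoeff_msupp //= eqxx mulr1.
by rewrite big1 ?addr0 // => m' /negbTE ne; rewrite ne mulr0 if_same.
Qed.

Lemma hpart0 p : hpart 0 p = (p@_0)%:MP.
Proof.
apply/mpolyP => m; rewrite mcoeff_hpart mcoeffC mdeg_eq0 eq_sym.
by case: eqP => [->|]; rewrite ?mulr1 ?mulr0.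
Qed.

Lemma hpartDC k p c : (0 < k)%N -> hpart k (p + c%:MP) = hpart k p.
Proof.
move=> k_gt0; apply/mpolyP => m; rewrite !mcoeff_hpart mcoeffD mcoeffC.
case: eqP => [deg_m|]; last by [].
rewrite (_ : m == 0%MM = false) ?mulr0 ?addr0 //.
by apply/negbTE; rewrite -mdeg_eq0 deg_m -lt0n.
Qed.

Lemma hpart_msize k p : (msize p <= k)%N -> hpart k p = 0.
Proof.
move=> le_pk; apply/mpolyP => m; rewrite mcoeff_hpart mcoeff0.
by case: eqP => // def_k; apply/memN_msupp_eq0/msize_mdeg_ge; rewrite def_k.
Qed.

Lemma mpoly_hpart_eq0 p : (forall k, hpart k p = 0) -> p = 0.
Proof.
move=> hp0; apply/mpolyP => m.
by rewrite mcoeff0 -(mcoeff0 _ m) -(hp0 (mdeg m)) mcoeff_hpart eqxx.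
Qed.

Definition order_ge e p := forall m, (mdeg m < e)%N -> p@_m = 0.

Lemma order_geP e p : order_ge e p <-> (forall k, (k < e)%N -> hpart k p = 0).
Proof.
split=> [hp k lt_ke | hp m lt_me].
  apply/mpolyP => m; rewrite mcoeff_hpart mcoeff0.
  by case: eqP => // def_k; apply: hp; rewrite def_k.
by have := mcoeff_hpart (mdeg m) p m; rewrite eqxx hp ?mcoeff0.
Qed.

Lemma order_ge1 p : p@_0 = 0 -> order_ge 1 p.
Proof. by move=> p0 m; rewrite ltnS leqn0 mdeg_eq0 => /eqP ->. Qed.

Lemma order_ge1_subC p : order_ge 1 (p - (p@_0)%:MP).
Proof. by apply: order_ge1; rewrite mcoeffB mcoeffC eqxx mulr1 subrr. Qed.

Lemma mulr_mcoeff0_split p q : p * q = p@_0 *: q + (p - (p@_0)%:MP) * q.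
Proof. by rewrite -mul_mpolyC -mulrDl addrC subrK. Qed.

Lemma order_geM a b p q : order_ge a p -> order_ge b q -> order_ge (a + b) (p * q).
Proof.
move=> hp hq m lt_m; rewrite mcoeffM big1 // => -[m1 m2] /= /eqP def_m.
have deg_m : mdeg m = (mdeg m1 + mdeg m2)%N by rewrite {1}def_m mdegD.
have [lt_m1|le_m1] := ltnP (mdeg m1) a; first by rewrite hp ?mul0r.
by rewrite hq ?mulr0 //; lia.
Qed.

Lemma hpart1_mul q g : g@_0 = 0 -> hpart 1 (q * g) = q@_0 *: hpart 1 g.
Proof.
move=> g0; have high0 : hpart 1 ((q - (q@_0)%:MP) * g) = 0.
  apply: (iffLR (order_geP _ _) _ 1 (ltnSn 1)).
  exact: (@order_geM 1 1 _ _ (order_ge1_subC q) (order_ge1 g0)).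
by rewrite mulr_mcoeff0_split !hpartE linearD linearZ /= -!hpartE high0 addr0.
Qed.

End HomogeneousParts.

Lemma meval_zero (R : comNzRingType) n (p : {mpoly R[n]}) :
  p.@[fun _ => 0] = p@_0.
Proof.
elim/mpolyind: p => [|c m p _ _ IHp]; first by rewrite meval0 mcoeff0.
rewrite mevalD mevalZ mevalX IHp mcoeffD mcoeffZ mcoeffX; congr (c * _ + _).
have [->|m_ne0] := eqVneq m 0%MM.
  by rewrite big1 // => j _; rewrite mnm0E expr0.
have [j mj_ne0] : exists j, m j != 0%N.
  apply/existsP; apply: contraR m_ne0 => /existsPn mj0.
  by apply/eqP/mnmP => j; rewrite mnm0E; apply/eqP/negPn/mj0.
by rewrite (bigD1 j) //= expr0n (negbTE mj_ne0) mul0r.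
Qed.

Lemma dhomog1E (R : nzRingType) n (L : {mpoly R[n]}) :
  L \is 1.-homog -> L = \sum_j L@_U_(j) *: 'X_j.
Proof.
move=> homL; apply/mpolyP => m; rewrite raddf_sum /=.
under eq_bigr do rewrite mcoeffZ mcoeffX.
have [/eqP/mdeg1P[j /eqP ->]|deg_m] := eqVneq (mdeg m) 1%N.
  rewrite (bigD1 j) //= eqxx mulr1 big1 ?addr0 // => jp ne_jp.
  by rewrite eq_mnm1 (negbTE ne_jp) mulr0.
rewrite (dhomog_nemf_coeff homL) // big1 // => j _.
by case: eqP => [def_m|]; rewrite ?mulr0 //; rewrite -def_m mdeg1 in deg_m.
Qed.

Section IntegralDomain.
Variables (R : idomainType) (n : nat).
Implicit Types (p q L : {mpoly R[n]}).

Lemma order_geM_cancel e p q : p@_0 != 0 -> order_ge e (p * q) -> order_ge e q.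
Proof.
move=> p0 hpq; elim: e hpq => [|e IHe] hpq m lt_me; first by [].
have hq : order_ge e q by apply: IHe => m' lt_m'; apply: hpq; apply: ltnW.
have [|deg_m] := ltnP (mdeg m) e; first exact: hq.
have : (p * q)@_m = 0 by apply: hpq.
have high : ((p - (p@_0)%:MP) * q)@_m = 0.
  exact: (@order_geM _ _ 1 e _ _ (order_ge1_subC p) hq).
rewrite mulr_mcoeff0_split mcoeffD mcoeffZ high addr0.
by move/eqP; rewrite mulf_eq0 (negbTE p0) => /eqP.
Qed.

Lemma msize_dhomog1 L : L \is 1.-homog -> L != 0 -> msize L = 2.
Proof.
move=> homL L_ne0; have := dhomog_uniq L_ne0 homL (dhomog_msize homL).
by case: (msize L) (msize_poly_eq0 L) L_ne0 => [|[|[|]]] // ->.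
Qed.

Lemma mdvd_powers_eq0 L p :
  (1 < msize L)%N -> (forall k, mdvd (L ^+ k) p) -> p = 0.
Proof.
move=> szL dvd_p; apply/eqP; apply: contraT => p_ne0.
have L_ne0 : L != 0 by rewrite -msize_poly_eq0 -lt0n ltnW.
have sz_exp k : (k < msize (L ^+ k))%N.
  elim: k => [|k IHk]; first by rewrite expr0 msize1.
  rewrite exprS msizeM ?expf_neq0 // -subn1.
  by move: IHk szL; move: (msize L) (msize (L ^+ k)) => a b; lia.
have [u def_p] := dvd_p (msize p); set N := msize p in def_p.
have u_ne0 : u != 0 by apply: contra_neq p_ne0; rewrite def_p => ->; rewrite mul0r.
have : (msize (L ^+ N) <= msize p)%N.
  rewrite def_p msizeM ?expf_neq0 // -subn1.
  by have := msize_poly_eq0 u; rewrite (negbTE u_ne0); move: (msize u) => a; lia.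
by have := sz_exp N; rewrite /N; lia.
Qed.

Lemma mtdeg_dhomog1DC L c :
  L \is 1.-homog -> L != 0 -> mtdeg (L + c%:MP) = 1%N.
Proof.
move=> homL L_ne0; rewrite /mtdeg; suff -> : msize (L + c%:MP) = 2 by [].
apply/eqP; rewrite eqn_leq; apply/andP; split.
  apply: leq_trans (msizeD_le _ _) _.
  by rewrite msize_dhomog1 // msizeC geq_max; case: (c != 0).
rewrite ltnNge; apply: contra L_ne0 => le1.
by rewrite -(pihomog_dE homL) -hpartE -(hpartDC _ c) // hpart_msize.
Qed.

End IntegralDomain.

Section Divisibility.
Variables (R : comNzRingType) (n : nat) (L : {mpoly R[n]}).
Implicit Types (p q : {mpoly R[n]}).

Lemma mdvdD p q : mdvd L p -> mdvd L q -> mdvd L (p + q).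
Proof. by move=> [u ->] [v ->]; exists (u + v); rewrite mulrDl. Qed.

Lemma mdvd_mull p q : mdvd L q -> mdvd L (p * q).
Proof. by move=> [u ->]; exists (p * u); rewrite mulrA. Qed.

Lemma mdvd_mulB p p' q q' :
  mdvd L (p - p') -> mdvd L (q - q') -> mdvd L (p * q - p' * q').
Proof.
move=> dp dq; have -> : p * q - p' * q' = p * (q - q') + q' * (p - p') by ring.
by apply: mdvdD; apply: mdvd_mull.
Qed.

Lemma mdvd_sub_comp (t : n.-tuple {mpoly R[n]}) p :
  (forall j, mdvd L ('X_j - tnth t j)) -> mdvd L (p - (p \mPo t)).
Proof.
move=> dvdX; elim/mpolyind: p => [|c m p _ _ IHp].
  by rewrite comp_mpoly0 subrr; exists 0; rewrite mul0r.
rewrite raddfD /= comp_mpolyZ opprD addrACA -scalerBr; apply: mdvdD => //.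
rewrite -mul_mpolyC; apply: mdvd_mull.
rewrite comp_mpolyX {1}mpolyXE_id.
elim/big_rec2: _ => [|j x y _ dxy]; first by exists 0; rewrite subrr mul0r.
by apply: mdvd_mulB => //; rewrite subrXX mulrC; apply: mdvd_mull.
Qed.

End Divisibility.

Section LinearSubstitution.
Variables (R : comNzRingType) (n : nat) (t : n.-tuple {mpoly R[n]}).
Hypothesis t_homog : forall j, tnth t j \is 1.-homog.

Lemma comp_dhomog d (p : {mpoly R[n]}) :
  p \is d.-homog -> p \mPo t \is d.-homog.
Proof.
move=> /dhomogP hom_p; rewrite comp_mpolyE big_seq.
apply: rpred_sum => m /hom_p <-.
apply: rpredZ; rewrite /= mdegE.
elim/big_rec2: _ => [|j d' q _ hom_q]; first exact: dhomog1.
by apply: dhomogM => //; rewrite -[X in X.-homog]mul1n dhomogMn.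
Qed.

Lemma hpart_comp k (p : {mpoly R[n]}) : hpart k (p \mPo t) = hpart k p \mPo t.
Proof.
elim/mpolyind: p => [|c m p _ _ IHp].
  by rewrite !hpartE comp_mpoly0 pihomog0 comp_mpoly0.
rewrite !hpartE !linearP /= -!hpartE IHp; congr (_ *: _ + _).
have hom_m : 'X_[m] \is [in R[n], (mdeg m).-homog] by rewrite dhomogX.
rewrite !hpartE pihomogX; case: eqP => [<-|/eqP ne].
  by rewrite pihomog_dE ?comp_dhomog.
by rewrite comp_mpoly0 (pihomog_ne0 ne) ?comp_dhomog.
Qed.

End LinearSubstitution.

Definition tr_pair (R : comNzRingType) n (C : 'M[R]_n) (f : 'I_n -> 'I_n -> R) :=
  \tr (C *m \matrix_(k, l) f k l).

Section TracePairing.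
Variables (R : comNzRingType) (n : nat).
Implicit Types (C A : 'M[R]_n) (f g : 'I_n -> 'I_n -> R).

Lemma eq_tr_pair C f g : f =2 g -> tr_pair C f = tr_pair C g.
Proof. by move=> eq_fg; rewrite /tr_pair (eq_mx _ eq_fg). Qed.

Lemma tr_pairDZ C a b f g :
  tr_pair C (fun k l => a * f k l + b * g k l) = a * tr_pair C f + b * tr_pair C g.
Proof.
rewrite /tr_pair; have -> : \matrix_(k, l) (a * f k l + b * g k l) =
    a *: \matrix_(k, l) f k l + b *: \matrix_(k, l) g k l.
  by apply/matrixP => k l; rewrite !mxE.
by rewrite mulmxDr -!scalemxAr mxtraceD !mxtraceZ.
Qed.

Lemma tr_pair_adj_row A (u : 'I_n -> R) i :
  tr_pair (\adj A) (fun k l => u k * A i l) = \det A * u i.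
Proof.
have -> : tr_pair (\adj A) (fun k l => u k * A i l) =
    \tr (\adj A *m ((\row_k u k)^T *m row i A)).
  by congr (\tr (_ *m _)); apply/matrixP => k l; rewrite !mxE big_ord1 !mxE.
rewrite mulmxA mxtrace_mulC mulmxA -row_mul mul_mx_adj trace_mx11 !mxE.
rewrite (bigD1 i) //= big1 ?addr0; last first.
  by move=> j /negbTE ne; rewrite !mxE eq_sym ne mulr0n mul0r.
by rewrite !mxE eqxx mulr1n.
Qed.

End TracePairing.

Section Derivatives.
Variables (R : comNzRingType) (n : nat).
Implicit Types (p L : {mpoly R[n]}) (A : 'M[{mpoly R[n]}]_n).

Lemma mderiv_exp j p k : (p ^+ k.+1)^`M(j) = (p ^+ k * p^`M(j)) *+ k.+1.
Proof.
elim: k => [|k IHk]; first by rewrite expr1 expr0 mul1r.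
by rewrite exprS mderivM IHk exprS; ring.
Qed.

Lemma mderiv_dhomog1 j L : L \is 1.-homog -> L^`M(j) = (L@_U_(j))%:MP.
Proof.
move=> homL; apply/mpolyP => m; rewrite mcoeff_mderiv mcoeffC.
have [->|m_ne0] := eqVneq m 0%MM; first by rewrite add0m mnm0E mulr1.
rewrite mulr0 (dhomog_nemf_coeff homL) ?mul0rn //=.
by rewrite mdegD mdeg1 addn1 eqSS mdeg_eq0.
Qed.

Lemma mderiv2_dhomog1 j k L : L \is 1.-homog -> L^`M(j)^`M(k) = 0.
Proof. by move=> homL; rewrite (mderiv_dhomog1 j homL) mderivC. Qed.

Lemma mderiv_prod j m (f : 'I_m -> {mpoly R[n]}) :
  (\prod_(k < m) f k)^`M(j) =
  \sum_(l < m) \prod_(k < m) (if k == l then (f k)^`M(j) else f k).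
Proof.
elim: m f => [|m IHm] f; first by rewrite !big_ord0 -mpolyC1 mderivC.
rewrite [in LHS]big_ord_recl mderivM IHm [in RHS]big_ord_recl.
rewrite big_ord_recl eqxx mulr_sumr; congr (_ * _ + _).
by apply: eq_bigr => l _; rewrite big_ord_recl.
Qed.

Lemma mderiv_det j A :
  (\det A)^`M(j) = tr_pair (\adj A) (fun k l => (A k l)^`M(j)).
Proof.
pose Aj k := \matrix_(r, c) (if r == k then (A r c)^`M(j) else A r c).
have det_Aj k : \det (Aj k) = \sum_l (A k l)^`M(j) * cofactor A k l.
  rewrite (expand_det_row _ k); apply: eq_bigr => l _.
  rewrite mxE eqxx; congr (_ * (_ * \det _)).
  by apply/matrixP => r c; rewrite !mxE eq_sym (negbTE (neq_lift _ _)).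
have dsign k : ((-1) ^+ k : {mpoly R[n]})^`M(j) = 0.
  rewrite -signr_odd; case: (odd k); rewrite ?expr1 ?mderivN.
    by rewrite -mpolyC1 mderivC oppr0.
  by rewrite -mpolyC1 mderivC.
transitivity (\sum_k \det (Aj k)).
  rewrite /determinant raddf_sum /= exchange_big /=; apply: eq_bigr => s _.
  rewrite mderivM dsign mul0r add0r mderiv_prod mulr_sumr.
  apply: eq_bigr => k _; congr (_ * _); apply: eq_bigr => r _.
  by rewrite mxE; case: (r == k).
under eq_bigr do rewrite det_Aj.
rewrite exchange_big; apply: eq_bigr => l _; rewrite mxE.
by apply: eq_bigr => k _; rewrite !mxE mulrC.
Qed.

Lemma mderiv_jacobian_sym (G : 'I_n -> {mpoly R[n]}) i k l :
  (jacobian G)^T = jacobian G -> (jacobian G k l)^`M(i) = (G i)^`M(k)^`M(l).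
Proof.
move=> symJ; rewrite mxE mderiv_comm.
by have := congr1 (fun M : 'M_n => M i k) symJ; rewrite !mxE => <-.
Qed.

End Derivatives.

Section HyperplaneRestriction.
Variables (K : fieldType) (n : nat) (L : {mpoly K[n]}) (i : 'I_n).
Hypotheses (homL : L \is 1.-homog) (Li_ne0 : L@_U_(i) != 0).

(* [restrL] substitutes x_i := x_i - L / a_i; its image lies in the polynomials
   without x_i, i.e. it restricts to the hyperplane L = 0. *)
Definition restrL_tuple : n.-tuple {mpoly K[n]} :=
  [tuple 'X_j - ((j == i)%:R / L@_U_(i)) *: L | j < n].

Definition restrL : {rmorphism {mpoly K[n]} -> {mpoly K[n]}} :=
  comp_mpoly restrL_tuple.

Lemma restrL_tuple_homog j : tnth restrL_tuple j \is 1.-homog.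
Proof. by rewrite tnth_mktuple rpredB ?rpredZ // dhomogX /= mdeg1. Qed.

Lemma restrL_L : restrL L = 0.
Proof.
rewrite {1}(dhomog1E homL) raddf_sum /=.
under eq_bigr do rewrite comp_mpolyZ comp_mpolyXU nth_mktuple scalerBr scalerA.
rewrite sumrB -(dhomog1E homL) (bigD1 i) //= big1 ?addr0; last first.
  by move=> j /negbTE ne; rewrite ne mul0r mulr0 scale0r.
by rewrite eqxx mul1r mulfV // scale1r subrr.
Qed.

Lemma mdvd_sub_restrL p : mdvd L (p - restrL p).
Proof.
apply: mdvd_sub_comp => j; rewrite tnth_mktuple opprB addrC subrK.
by exists ((j == i)%:R / L@_U_(i))%:MP; rewrite mul_mpolyC.
Qed.

Lemma restrL_eq0P p : restrL p = 0 <-> mdvd L p.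
Proof.
split=> [p0 | [u ->]]; last by rewrite rmorphM restrL_L mulr0.
by have := mdvd_sub_restrL p; rewrite p0 subr0.
Qed.

Lemma hpart_restrL k p : hpart k (restrL p) = restrL (hpart k p).
Proof. exact/hpart_comp/restrL_tuple_homog. Qed.

Lemma mcoeff0_restrL p : (restrL p)@_0 = p@_0.
Proof.
have := congr1 (mcoeff 0) (hpart_restrL 0 p).
rewrite mcoeff_hpart mdeg0 eqxx => ->.
by rewrite hpart0 /= comp_mpolyC mcoeffC eqxx mulr1.
Qed.

Lemma mdvd_sub_mcoeff0 h X Y c :
  c != 0 -> h * X + L * Y = c%:MP -> mdvd L (h - (h@_0)%:MP).
Proof.
move=> c_ne0 /(congr1 restrL); rewrite rmorphD !rmorphM /= restrL_L mul0r addr0.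
rewrite comp_mpolyC => eq_c.
have h_ne0 : restrL h != 0.
  by apply: contra_eq_neq eq_c => ->; rewrite mul0r eq_sym mpolyC_eq0.
have X_ne0 : restrL X != 0.
  by apply: contra_eq_neq eq_c => ->; rewrite mulr0 eq_sym mpolyC_eq0.
have : msize (restrL h) = 1%N.
  have := congr1 (fun p => msize p) eq_c; rewrite /= msizeM // msizeC c_ne0.
  move: (msize_poly_eq0 (restrL h)) (msize_poly_eq0 (restrL X)).
  by rewrite (negbTE h_ne0) (negbTE X_ne0); move: (msize _) (msize _) => a b; lia.
move/eqP/msize_poly1P => [c' _ def_h].
have := mdvd_sub_restrL h; rewrite def_h.
by have := mcoeff0_restrL h; rewrite def_h mcoeffC eqxx mulr1 => ->.
Qed.

Lemma mdvd_of_low_hparts F q g d :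
  hpart 1 F = L -> L != 0 -> (forall k, (k < d)%N -> mdvd L (hpart k F)) ->
  F = q * g -> g@_0 = 0 -> (msize g <= d)%N -> mdvd L F.
Proof.
move=> F1 L_ne0 dvd_low def_F g0 szg.
have q0 : q@_0 != 0.
  by apply: contra_neq L_ne0 => q0; rewrite -F1 def_F hpart1_mul // q0 scale0r.
have low_F : order_ge d (restrL q * restrL g).
  rewrite -rmorphM -def_F; apply/order_geP => k lt_kd.
  by rewrite hpart_restrL; apply/restrL_eq0P/dvd_low.
have q0' : (restrL q)@_0 != 0 by rewrite mcoeff0_restrL.
have /order_geP low_g := order_geM_cancel q0' low_F.
suff /restrL_eq0P [u def_g] : restrL g = 0.
  by exists (q * u); rewrite def_F def_g mulrA.
apply: mpoly_hpart_eq0 => k; have [/low_g //|le_dk] := ltnP k d.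
by rewrite hpart_restrL hpart_msize ?rmorph0 // (leq_trans szg).
Qed.

End HyperplaneRestriction.

Lemma unit_mod_cancel (R : idomainType) (L X Q Z v w : R) s :
  L != 0 -> w \is a GRing.unit -> X + L * Q = w ->
  L ^+ s * (v * X) + L ^+ s.+1 * Z = 0 -> exists u, v = u * L.
Proof.
move=> L_ne0 w_unit def_w.
rewrite exprSr -mulrA -mulrDr => /eqP; rewrite mulf_eq0 expf_eq0 (negbTE L_ne0).
have -> : X = w - L * Q by rewrite -def_w addrK.
rewrite andbF /= => /eqP eq0.
exists ((v * Q - Z) / w); apply: (mulIr w_unit).
rewrite mulrAC divrK //; apply/eqP; rewrite -subr_eq0; apply/eqP.
by rewrite -eq0; ring.
Qed.

Section JacobianPairing.
Variables (K : fieldType) (n : nat) (L : {mpoly K[n]}) (i : 'I_n).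
Hypotheses (homL : L \is 1.-homog) (Li_ne0 : L@_U_(i) != 0).
Variables (C : 'M[{mpoly K[n]}]_n) (w : K) (F : {mpoly K[n]}).
Hypotheses (char0 : [pchar K] =i pred0) (w_ne0 : w != 0).
(* In the application C is the adjugate of JG and F = G_i - c: pairing C with
   (grad L)^T (grad F) gives det JG * a_i, and pairing it with Hess F gives
   d/dx_i det JG. *)
Hypotheses (pair_grad : tr_pair C (fun k l => L^`M(k) * F^`M(l)) = w%:MP)
           (pair_hess : tr_pair C (fun k l => F^`M(k)^`M(l)) = 0).

Let X := tr_pair C (fun k l => L^`M(k) * L^`M(l)).

Fact L_neq0 : L != 0.
Proof. by apply: contra_neq Li_ne0 => ->; rewrite mcoeff0. Qed.

Lemma mdvd_cofactor_sub_mcoeff0 h : F = h * L -> mdvd L (h - (h@_0)%:MP).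
Proof.
move=> def_F; apply: (mdvd_sub_mcoeff0 homL Li_ne0 w_ne0 (X := X)
  (Y := tr_pair C (fun k l => L^`M(k) * h^`M(l)))).
rewrite -tr_pairDZ -{}pair_grad; apply: eq_tr_pair => k l.
by rewrite def_F mderivM; ring.
Qed.

Lemma mdvd_cofactor_expS s h :
  F = h * L -> mdvd (L ^+ s.+1) (h - 1) -> mdvd (L ^+ s.+2) (h - 1).
Proof.
move=> def_F [u def_h].
have {def_F} def_F : F = L + L ^+ s.+2 * u.
  by rewrite def_F -(subrK 1 h) def_h !exprS; ring.
have dL2 k l : L^`M(k)^`M(l) = 0 by apply: mderiv2_dhomog1.
have dF k :
    F^`M(k) = L^`M(k) + L ^+ s.+1 * ((L^`M(k) * u) *+ s.+2 + L * u^`M(k)).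
  by rewrite def_F mderivD mderivM mderiv_exp !exprS; ring.
pose N : {mpoly K[n]} := (s.+2 * s.+1)%:R.
pose P k l := L^`M(k) * ((L^`M(l) * u) *+ s.+2 + L * u^`M(l)).
pose W k l :=
  (L^`M(k) * u^`M(l) + L^`M(l) * u^`M(k)) *+ s.+2 + L * u^`M(k)^`M(l).
have pair_X : X + L * (L ^+ s * tr_pair C P) = w%:MP.
  rewrite mulrA -exprS -[X]mul1r -tr_pairDZ -{}pair_grad.
  by apply: eq_tr_pair => k l; rewrite dF /P !exprS; ring.
have pair_NX : L ^+ s * (N * u * X) + L ^+ s.+1 * tr_pair C W = 0.
  rewrite (mulrA _ (N * u)) -tr_pairDZ -{}pair_hess; apply: eq_tr_pair => k l.
  rewrite dF mderivD dL2 add0r (mderivM l (L ^+ s.+1)) mderiv_exp.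
  rewrite mderivD mderivMn (mderivM l (L^`M(k))) (mderivM l L) !dL2.
  by rewrite /N /W !exprS; ring.
have w_unit : (w%:MP : {mpoly K[n]}) \is a GRing.unit.
  by apply/unitrPr; exists w^-1%:MP; rewrite -mpolyCM mulfV.
have [v def_Nu] := unit_mod_cancel L_neq0 w_unit pair_X pair_NX.
have N_ne0 : (s.+2 * s.+1)%:R != 0 :> K by move/pcharf0P: char0 => ->.
exists ((s.+2 * s.+1)%:R^-1%:MP * v); rewrite def_h.
have -> : u = (s.+2 * s.+1)%:R^-1%:MP * (N * u).
  by rewrite mulrA /N -mpolyC_nat -mpolyCM mulVf // mul1r.
by rewrite def_Nu !exprS; ring.
Qed.

Lemma linear_factor_eq : mdvd L F -> hpart 1 F = L -> F = L.
Proof.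
move=> [h def_F] F1.
have h0 : h@_0 = 1.
  have : hpart 1 F = h@_0 *: L.
    rewrite def_F hpart1_mul ?hpartE ?pihomog_dE //.
    by apply: (dhomog_nemf_coeff homL); rewrite /= mdeg0.
  rewrite F1 => /(congr1 (mcoeff U_(i))); rewrite mcoeffZ -{1}[L@_U_(i)]mul1r.
  by move/(mulIf Li_ne0).
have dvd_pow k : mdvd (L ^+ k) (h - 1).
  case: k => [|k]; first by exists (h - 1); rewrite expr0 mulr1.
  elim: k => [|k IHk]; last exact: mdvd_cofactor_expS def_F IHk.
  by rewrite expr1 -mpolyC1 -h0; apply: mdvd_cofactor_sub_mcoeff0.
have : h - 1 = 0.
  by apply: (mdvd_powers_eq0 _ dvd_pow); rewrite msize_dhomog1 ?L_neq0.
by move/eqP; rewrite subr_eq0 def_F => /eqP ->; rewrite mul1r.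
Qed.

End JacobianPairing.

Theorem theorem7p3 (K : fieldType) (n : nat) (G : 'I_n -> {mpoly K[n]})
  (i : 'I_n) (d : nat) :
  [pchar K] =i pred0 ->
  keller G ->
  (jacobian G)^T = jacobian G ->
  (0 < d)%N ->
  (hpart 1 (G i))^`M(i) != 0 ->
  (forall k : nat, (1 <= k < d)%N -> mdvd (hpart 1 (G i)) (hpart k (G i))) ->
  (exists (c : K) (g : {mpoly K[n]}),
      mdvd g (G i - c%:MP) /\ (mtdeg g < d)%N /\ g.@[fun _ => 0] = 0) ->
  mtdeg (G i) = 1%N.
Proof.
move=> char0 [dJ dJ_ne0 detJ] symJ d_gt0 dL_ne0 dvd_parts.
move=> [c [g [[q def_F] [deg_g g0]]]].
set J := jacobian G; set L := hpart 1 (G i) in dL_ne0 dvd_parts *.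
set F := G i - c%:MP in def_F.
have homL : L \is 1.-homog := pihomogP mdeg 1 (G i).
have Li_ne0 : L@_U_(i) != 0 by move: dL_ne0; rewrite mderiv_dhomog1 // mpolyC_eq0.
have dF k : F^`M(k) = (G i)^`M(k) by rewrite mderivB mderivC subr0.
have hpartF k : (0 < k)%N -> hpart k F = hpart k (G i).
  by move=> k_gt0; rewrite /F -mpolyCN hpartDC.
have dvd_F : mdvd L F.
  apply: (mdvd_of_low_hparts homL Li_ne0 (hpartF 1%N isT) (L_neq0 Li_ne0)
    (d := d) _ def_F).
  - case=> [|k] lt_kd; last by rewrite hpartF //; apply: dvd_parts.
    by exists 0; rewrite mul0r hpart0 -meval_zero def_F mevalM g0 mulr0.
  - by rewrite -meval_zero.
  - by move: deg_g; rewrite /mtdeg; case: (msize g).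
suff -> : G i = L + c%:MP by rewrite mtdeg_dhomog1DC ?(L_neq0 Li_ne0).
rewrite -(linear_factor_eq homL Li_ne0 (C := \adj J) (w := dJ * L@_U_(i))
  (F := F) char0) ?subrK ?mulf_neq0 //.
- transitivity (tr_pair (\adj J) (fun k l => L^`M(k) * J i l)).
    by apply: eq_tr_pair => k l; rewrite mxE dF.
  by rewrite tr_pair_adj_row detJ mderiv_dhomog1 // mpolyCM.
- transitivity (\det J)^`M(i); last by rewrite detJ mderivC.
  rewrite mderiv_det; apply: eq_tr_pair => k l.
  by rewrite mderiv_jacobian_sym // dF.
- by rewrite hpartF.
Qed.
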